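(* As formal power series in $x, y, z$, $$\sum_{p,q,k \ge 0} u((p,q),k)\, x^p y^q z^k \;=\; \frac{1}{1-(1+z)(x+y-xy)}.$$
   Context: Let $\mathbb{N} = \{0,1,2,\dots\}$. For $(p,q) \in \mathbb{N}^2$ and $n \in \mathbb{N}$, an unrestricted generalized jump path of length $n$ starting at $(p,q)$ is a sequence $(x_0, \dots, x_n)$ of points of $\mathbb{N}^2$ satisfying three conditions: - $x_0 = (p,q)$; - for every $i$, each coordinate of $x_{i+1}$ is at most the corresponding coordinate of $x_i$; - $x_{i+1} \ne x_i$ for every $i$. Let $u((p,q),n)$ denote the number of such paths. *)

From HB Require Import structures.
From mathcomp Require Import all_boot all_order all_algebra.
Set Implicit Arguments. Unset Strict Implicit. Unset Printing Implicit Defensive.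
Import Order.TTheory GRing.Theory Num.Theory.

Definition le_pt (a b : nat * nat) : bool := (a.1 <= b.1) && (a.2 <= b.2).

Definition is_ugj_path (p q n : nat) (s : seq (nat * nat)) : bool :=
  [&& size s == n.+1, nth (0,0) s 0 == (p, q)
    & all (fun i => le_pt (nth (0,0) s i.+1) (nth (0,0) s i)
                    && (nth (0,0) s i.+1 != nth (0,0) s i)) (iota 0 n)].

(* Every point of such a path lies in the box [0,p] x [0,q], so the paths are
   counted among the (n+1)-tuples of points of that finite box. *)
Definition u (pq : nat * nat) (n : nat) : nat :=
  #|[set t : n.+1.-tuple ('I_pq.1.+1 * 'I_pq.2.+1) |
      is_ugj_path pq.1 pq.2 n
        (map (fun a : 'I_pq.1.+1 * 'I_pq.2.+1 => (val a.1, val a.2)) t)]|.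

(* Formal power series in x, y, z with integer coefficients:
   F a b c is the coefficient of x^a y^b z^c. *)
Definition ps := nat -> nat -> nat -> int.

Definition ps_one : ps := fun a b c => ((a == 0) && (b == 0) && (c == 0))%:R%R.
Definition ps_x : ps := fun a b c => ((a == 1) && (b == 0) && (c == 0))%:R%R.
Definition ps_y : ps := fun a b c => ((a == 0) && (b == 1) && (c == 0))%:R%R.
Definition ps_z : ps := fun a b c => ((a == 0) && (b == 0) && (c == 1))%:R%R.
Definition ps_add (F G : ps) : ps := fun a b c => (F a b c + G a b c)%R.
Definition ps_sub (F G : ps) : ps := fun a b c => (F a b c - G a b c)%R.
Definition ps_mul (F G : ps) : ps := fun a b c =>
  (\sum_(i < a.+1) \sum_(j < b.+1) \sum_(k < c.+1)
     F i j k * G (a - i)%N (b - j)%N (c - k)%N)%R.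

Definition u_gf : ps := fun p q k => Posz (u (p, q) k).

Definition denom : ps :=
  ps_sub ps_one (ps_mul (ps_add ps_one ps_z)
                        (ps_sub (ps_add ps_x ps_y) (ps_mul ps_x ps_y))).

From mathcomp Require Import all_boot all_order all_algebra.
From mathcomp Require Import zify.
From Stdlib Require Import FunctionalExtensionality.
Set Implicit Arguments. Unset Strict Implicit. Unset Printing Implicit Defensive.

(* A jump path of length n+1 from (p,q) is (p,q) followed by a
   jump path of length n from a point (i,j) <= (p,q) with (i,j) <> (p,q).
   Enumerating the paths by this first step ([ugj_paths]) and identifying
   u((p,q),n) with the length of the enumeration yields
     u((p,q),0) = 1   and   u((p,q),n+1) + u((p,q),n) = sum_(i<=p, j<=q) u((i,j),n).

   Since 1 - (1+z)(x+y-xy) = (1+z)(1-x)(1-y) - z, the coefficient of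
   x^a y^b z^c in F * denom is  D F_c (a,b) + D F_(c-1) (a,b) - F_(c-1) (a,b),
   where F_c = F(_,_,c) and D is the mixed second difference in (a,b) with
   zero boundary ([diff2]); the last two terms are absent when c = 0.

   D inverts the two-dimensional prefix sum, so for c >= 1 the
   recurrence makes the coefficient vanish, while for c = 0 the constant
   slice u(_,_,0) = 1 leaves exactly the coefficient 1 at a = b = 0. *)

Lemma ugj_path0 p q s : is_ugj_path p q 0 s = (s == [:: (p, q)]).
Proof.
rewrite /is_ugj_path /= andbT.
case: s => [|x [|y s]] //=; first by rewrite eqseq_cons eqxx andbT.
by rewrite eqseq_cons /= andbF.
Qed.

Lemma ugj_pathS p q n s : is_ugj_path p q n.+1 s =
  if s is x :: s' then (x == (p, q)) &&
    (if s' is y :: _ then [&& le_pt y x, y != x & is_ugj_path y.1 y.2 n s']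
     else false)
  else false.
Proof.
rewrite /is_ugj_path.
case: s => [|x [|y s]] //=; first by rewrite andbF.
rewrite !eqSS -[1]/(1 + 0) iotaDl all_map /=.
case: y => a b /=; rewrite eqxx /=.
by case: (size s == n); rewrite ?andbF /= ?andbT -?andbA.
Qed.

Lemma le_pt_refl a : le_pt a a.
Proof. by rewrite /le_pt !leqnn. Qed.

Lemma le_pt_trans a b c : le_pt a b -> le_pt b c -> le_pt a c.
Proof. rewrite /le_pt => /andP[? ?] /andP[? ?]; apply/andP; split; lia. Qed.

Definition box (p q : nat) : seq (nat * nat) :=
  [seq (i, j) | i <- iota 0 p.+1, j <- iota 0 q.+1].

Lemma mem_box p q ij : (ij \in box p q) = le_pt ij (p, q).
Proof.
case: ij => i j; rewrite /le_pt /=.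
apply/allpairsP/andP => [[[a b]] [] /[!mem_iota] /= ha hb [-> ->] | [hi hj]].
  by split; lia.
by exists (i, j); rewrite !mem_iota /=; split => //; lia.
Qed.

Lemma uniq_box p q : uniq (box p q).
Proof. by apply: allpairs_uniq; rewrite ?iota_uniq // => -[a b] [c d]. Qed.

Definition below (p q : nat) : seq (nat * nat) := [seq ij <- box p q | ij != (p, q)].

Lemma mem_below p q ij : (ij \in below p q) = (ij != (p, q)) && le_pt ij (p, q).
Proof. by rewrite mem_filter mem_box. Qed.

Fixpoint ugj_paths (p q n : nat) : seq (seq (nat * nat)) :=
  if n is n'.+1 then
    [seq (p, q) :: t | ij <- below p q, t <- ugj_paths ij.1 ij.2 n']
  else [:: [:: (p, q)]].

Lemma mem_ugj_paths n p q s : (s \in ugj_paths p q n) = is_ugj_path p q n s.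
Proof.
elim: n p q s => [|n IH] p q s; first by rewrite ugj_path0 inE.
rewrite ugj_pathS /=; apply/allpairsPdep/idP.
  case=> [[i j]] [[|y t]] [] /[!mem_below] /andP[ne_ij le_ij] /[!IH] // ht ->.
  have eq_y : y = (i, j) by case/and3P: ht => _ /eqP.
  by subst y; rewrite eqxx le_ij ne_ij.
case: s => [|x [|y t]] //=; first by rewrite andbF.
case/andP=> /eqP -> /and3P[le_y ne_y ht].
by exists y, (y :: t); rewrite mem_below ne_y le_y IH.
Qed.

Lemma head_ugj_paths n p q t : t \in ugj_paths p q n -> nth (0,0) t 0 = (p, q).
Proof. by rewrite mem_ugj_paths => /and3P[_ /eqP]. Qed.

Lemma uniq_ugj_paths n p q : uniq (ugj_paths p q n).
Proof.
elim: n p q => [|n IH] p q //=.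
apply: allpairs_uniq_dep => [||[ij t] [ij' t']]; first by rewrite filter_uniq ?uniq_box.
  by move=> ij _; apply: IH.
move=> /allpairsPdep [a [b [_ hb [-> ->]]]] /allpairsPdep [a' [b' [_ hb' [-> ->]]]].
case=> eq_b; rewrite -eq_b in hb'.
have eq_a : a = a'.
  move: hb hb' => /head_ugj_paths head_b /head_ugj_paths.
  by rewrite head_b; case: a a' {head_b} => ? ? [? ?] [-> ->].
by rewrite eq_a eq_b.
Qed.

(* A jump path never leaves the box below its starting point; this is what
   makes the finite-tuple encoding used by [u] faithful. *)
Lemma ugj_path_in_box n p q s :
  is_ugj_path p q n s -> forall z, z \in s -> le_pt z (p, q).
Proof.
elim: n p q s => [|n IH] p q s.
  by rewrite ugj_path0 => /eqP -> z /[!inE] /eqP ->; apply: le_pt_refl.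
rewrite ugj_pathS; case: s => [|x [|y t]] //; first by rewrite andbF.
case/andP=> /eqP -> /and3P[le_y _ ht] z /[!inE] /orP[/eqP -> | z_t].
  exact: le_pt_refl.
exact: le_pt_trans (IH _ _ _ ht z z_t) le_y.
Qed.

Lemma u_ugj_paths p q n : u (p, q) n = size (ugj_paths p q n).
Proof.
rewrite /u /=.
set pt := fun a : 'I_p.+1 * 'I_q.+1 => (val a.1, val a.2).
have pt_inj : injective pt by move=> [a b] [c d] [/val_inj -> /val_inj ->].
rewrite cardE -(size_map (fun t : n.+1.-tuple _ => map pt t)).
apply/perm_size/uniq_perm; [|exact: uniq_ugj_paths|].
  by rewrite map_inj_uniq ?enum_uniq // => t t' /(inj_map pt_inj) /val_inj.
move=> s; rewrite mem_ugj_paths; apply/mapP/idP => [[t] | s_path].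
  by rewrite mem_enum inE => ? ->.
pose to_box (z : nat * nat) : 'I_p.+1 * 'I_q.+1 := (inord z.1, inord z.2).
have pt_to_box : map pt (map to_box s) = s.
  rewrite -map_comp -[RHS]map_id; apply/eq_in_map => -[a b] /(ugj_path_in_box s_path).
  by case/andP=> le_a le_b; rewrite /pt /= !inordK.
have size_s : size (map to_box s) == n.+1 by rewrite size_map; case/and3P: s_path.
by exists (Tuple size_s); rewrite ?mem_enum ?inE /= pt_to_box.
Qed.

Lemma u_zero p q : u (p, q) 0 = 1.
Proof. by rewrite u_ugj_paths. Qed.

Definition box_sum (f : nat -> nat -> nat) (p q : nat) : nat :=
  \sum_(0 <= i < p.+1) \sum_(0 <= j < q.+1) f i j.

Lemma box_sum0l f q : box_sum f 0 q = \sum_(0 <= j < q.+1) f 0 j.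
Proof. by rewrite /box_sum big_nat1. Qed.

Lemma box_sumSl f p q :
  box_sum f p.+1 q = box_sum f p q + \sum_(0 <= j < q.+1) f p.+1 j.
Proof. by rewrite /box_sum big_nat_recr. Qed.

(* The path recurrence: splitting off the first jump, the paths of length n+1
   from (p,q) are counted by the prefix sum of u(_,n) minus the term (p,q). *)
Lemma u_succ p q n :
  u (p, q) n.+1 + u (p, q) n = box_sum (fun i j => u (i, j) n) p q.
Proof.
rewrite !u_ugj_paths /= size_allpairs_dep sumnE big_map.
have -> : box_sum (fun i j => u (i, j) n) p q =
          \sum_(ij <- box p q) size (ugj_paths ij.1 ij.2 n).
  rewrite /box big_allpairs_dep /box_sum /index_iota !subn0.
  by do 2![apply: eq_bigr => ? _]; rewrite u_ugj_paths.
rewrite [RHS](bigD1_seq (p, q)) ?uniq_box ?mem_box ?le_pt_refl //.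
by rewrite /below big_filter addnC.
Qed.

Import GRing.Theory.
Local Open Scope ring_scope.

Lemma sum_ord_pick (R : pzSemiRingType) (a i0 : nat) (F : 'I_a.+1 -> R) :
  \sum_(i < a.+1) (i == i0 :> nat)%:R * F i = if (i0 <= a)%N then F (inord i0) else 0.
Proof.
under eq_bigr => i _ do rewrite mulr_natl mulrb.
rewrite -big_mkcond; case: leqP => [le_i0_a | lt_a_i0].
  by rewrite (big_pred1 (inord i0)) // => i; rewrite /= -val_eqE /= inordK.
by rewrite big1 // => i /eqP i_eq; move: (ltn_ord i); rewrite i_eq ltnNge lt_a_i0.
Qed.

Definition delta (i0 j0 k0 : nat) : ps :=
  fun a b c => ((a == i0) && (b == j0) && (c == k0))%:R.

Lemma mul_delta_l i0 j0 k0 G a b c :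
  ps_mul (delta i0 j0 k0) G a b c =
  if [&& (i0 <= a)%N, (j0 <= b)%N & (k0 <= c)%N]
  then G (a - i0)%N (b - j0)%N (c - k0)%N else 0.
Proof.
have natr_and3 (b1 b2 b3 : bool) : (b1 && b2 && b3)%:R = b1%:R * (b2%:R * b3%:R) :> int.
  by case: b1; case: b2; case: b3; rewrite ?mul0r ?mul1r.
rewrite /ps_mul /delta.
under eq_bigr => i _ do under eq_bigr => j _ do under eq_bigr => k _ do
  rewrite natr_and3 -!mulrA.
under eq_bigr => i _ do under eq_bigr => j _ do rewrite -mulr_sumr -mulr_sumr.
under eq_bigr => i _ do rewrite -mulr_sumr.
rewrite sum_ord_pick; under eq_bigr => i _ do rewrite sum_ord_pick.
rewrite sum_ord_pick.
by case: (leqP i0 a) => //= ?; case: (leqP j0 b) => //= ?; case: (leqP k0 c) => //= ?;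
  rewrite !inordK.
Qed.

Lemma ps_mulC F G a b c : ps_mul F G a b c = ps_mul G F a b c.
Proof.
rewrite /ps_mul (reindex_inj rev_ord_inj); apply: eq_bigr => i _.
rewrite (reindex_inj rev_ord_inj); apply: eq_bigr => j _.
rewrite (reindex_inj rev_ord_inj); apply: eq_bigr => k _.
by rewrite /= !subSS !subKn -1?ltnS // mulrC.
Qed.

Lemma mul_addl F G H a b c :
  ps_mul (ps_add F G) H a b c = ps_mul F H a b c + ps_mul G H a b c.
Proof.
rewrite /ps_mul -big_split; apply: eq_bigr => i _.
rewrite -big_split; apply: eq_bigr => j _.
by rewrite -big_split; apply: eq_bigr => k _; rewrite mulrDl.
Qed.

Lemma mul_subl F G H a b c :
  ps_mul (ps_sub F G) H a b c = ps_mul F H a b c - ps_mul G H a b c.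
Proof.
rewrite /ps_mul -sumrB; apply: eq_bigr => i _.
rewrite -sumrB; apply: eq_bigr => j _.
by rewrite -sumrB; apply: eq_bigr => k _; rewrite mulrBl.
Qed.

Lemma eq_mul_l F F' G a b c : (forall a b c, F a b c = F' a b c) ->
  ps_mul F G a b c = ps_mul F' G a b c.
Proof.
move=> eqF; do 3![apply: eq_bigr => ? _]; by rewrite eqF.
Qed.

Definition denom_deltas : ps :=
  (ps_add (ps_sub (ps_sub (ps_add (ps_sub (ps_sub (delta 0 0 0) (delta 1 0 0))
     (delta 0 1 0)) (delta 1 1 0)) (delta 1 0 1)) (delta 0 1 1)) (delta 1 1 1))%N.

Lemma denomE a b c : denom a b c = denom_deltas a b c.
Proof.
rewrite /denom /denom_deltas /ps_sub /ps_add mul_addl.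
rewrite -[ps_one]/(delta 0 0 0)%N -[ps_z]/(delta 0 0 1)%N !mul_delta_l !subn0.
by case: a => [|[|a]]; case: b => [|[|b]]; case: c => [|[|c]].
Qed.

(* Mixed second difference g(a,b) - g(a-1,b) - g(a,b-1) + g(a-1,b-1), where
   terms with a negative index are dropped. *)
Definition diff2 (g : nat -> nat -> int) (a b : nat) : int :=
  match a, b with
  | 0, 0 => g a b
  | a'.+1, 0 => g a b - g a' b
  | 0, b'.+1 => g a b - g a b'
  | a'.+1, b'.+1 => g a b - g a' b - g a b' + g a' b'
  end.

Lemma mul_denom F a b c :
  ps_mul F denom a b c =
  diff2 (fun i j => F i j c) a b +
  (if c is n.+1 then diff2 (fun i j => F i j n) a b - F a b n else 0).
Proof.
rewrite ps_mulC (eq_mul_l _ _ _ _ denomE) /denom_deltas.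
rewrite !(mul_addl, mul_subl) !mul_delta_l.
case: a => [|a]; case: b => [|b]; case: c => [|c] /=; rewrite ?subn0 ?subSS ?subn0; lia.
Qed.

Lemma eq_diff2 g h a b : (forall i j, g i j = h i j) -> diff2 g a b = diff2 h a b.
Proof. by move=> eq_gh; case: a => [|a]; case: b => [|b]; rewrite /= !eq_gh. Qed.

Lemma diff2D g h a b :
  diff2 g a b + diff2 h a b = diff2 (fun i j => g i j + h i j) a b.
Proof. by case: a => [|a]; case: b => [|b] /=; lia. Qed.

Lemma diff2_box_sum f a b : diff2 (fun i j => (box_sum f i j)%:Z) a b = (f a b)%:Z.
Proof.
case: a => [|a]; case: b => [|b]; rewrite /= ?box_sumSl ?box_sum0l ?big_nat1 //.
all: rewrite ?(big_nat_recr b.+1) //=; lia.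
Qed.

Theorem mainTheorem5 : ps_mul u_gf denom = ps_one.
Proof.
apply: functional_extensionality => a; apply: functional_extensionality => b.
apply: functional_extensionality => c.
rewrite mul_denom; case: c => [|n].
  by rewrite addr0 /u_gf; case: a => [|a]; case: b => [|b]; rewrite /= !u_zero ?subrr.
rewrite /ps_one andbF addrA diff2D.
rewrite (eq_diff2 (h := fun i j => box_sum (fun i' j' => u (i', j') n) i j)).
  by rewrite diff2_box_sum subrr.
by move=> i j; rewrite /u_gf -PoszD u_succ.
Qed.
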